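(* Let $\mathbf x\in\mathbb{R}^p$ be independent variables and $\mathbf u\in\mathbb{R}^q$ dependent variables, and consider a system of $q$ differential equations of the form $\boldsymbol\ell(\mathbf x,\mathbf u^{(n)}) = W\boldsymbol\theta(\mathbf x,\mathbf u^{(n)})$, where $\boldsymbol\ell=(\ell^1,\dots,\ell^q)$ and $\boldsymbol\theta=(\theta^1,\dots,\theta^m)$ are fixed functions on the $n$th order jet space and $W\in\mathbb{R}^{q\times m}$ is a constant coefficient matrix, and suppose the system admits a symmetry group $G$. Assume there exist $n$th-order differential invariants of $G$, $\eta_0^1,\dots,\eta_0^q$ and $\eta^1,\dots,\eta^K$, such that (1) the system of equations can be expressed as $\boldsymbol\eta_0 = W'\boldsymbol\theta'(\boldsymbol\eta)$, where $\boldsymbol\eta_0=(\eta_0^1,\dots,\eta_0^q)$ and $\boldsymbol\eta=(\eta^1,\dots,\eta^K)$, and (2) $\eta_0^i = T^{ijk}\theta^k\ell^j$ and $(\theta')^i = S^{ij}\theta^j$ (summation over repeated indices), for some functions $\boldsymbol\theta'(\boldsymbol\eta)=((\theta')^1,\dots,(\theta')^{m'})$ and constant tensors $W'\in\mathbb{R}^{q\times m'}$, $T$ and $S$. Then the space of all possible coefficient matrices $W$ (i.e. those for which the system $\boldsymbol\ell=W\boldsymbol\theta$ can be so expressed, for some $W'$, with the given invariants, functions $\boldsymbol\theta'$ and tensors $T,S$) is a linear subspace of $\mathbb{R}^{q\times m}$.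
   Context: The $n$th order jet space $M^{(n)}$ has coordinates $(\mathbf x,\mathbf u^{(n)})$, where $\mathbf u^{(n)}$ collects $\mathbf u$ and all its partial derivatives with respect to $\mathbf x$ up to order $n$. A symmetry group of a system of differential equations is a local group $G$ of point transformations of $(\mathbf x,\mathbf u)$-space that maps solutions of the system to solutions; it acts on $M^{(n)}$ by the induced (prolonged) action $g^{(n)}$. An $n$th-order differential invariant of $G$ is a smooth function $\eta:M^{(n)}\to\mathbb{R}$ with $\eta(g^{(n)}\cdot z)=\eta(z)$ for all $g\in G$ and all $z\in M^{(n)}$ where defined. Repeated indices are summed (Einstein convention). *)

From HB Require Import structures.
From mathcomp Require Import all_boot all_order all_algebra.
From mathcomp Require Import reals.
Set Implicit Arguments. Unset Strict Implicit. Unset Printing Implicit Defensive.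
Import Order.TTheory GRing.Theory Num.Theory.
Local Open Scope ring_scope.

(* Dimension of the n-th order jet space M^(n) over (x,u) in R^p x R^q:
   p independent coordinates x plus, for each of the q dependent variables,
   all partial derivatives of order 0..n, i.e. q * C(p+n, n) coordinates. *)
Definition jet_dim (p q n : nat) : nat := (p + q * 'C(p + n, n))%N.

Definition jet (R : realType) (p q n : nat) := 'rV[R]_(jet_dim p q n).

(* eta is a differential invariant of the (prolonged, local) action act of G
   on jet space; dom g z says that g^(n) . z is defined. *)
Definition diff_invariant (R : realType) (J G : Type)
  (dom : G -> J -> Prop) (act : G -> J -> J) (eta : J -> R) : Prop :=
  forall g z, dom g z -> eta (act g z) = eta z.

(* W is admissible: the system  ell = W theta  can be expressed as
   eta0 = W' theta'(eta) for some W', i.e. the invariant system is obtained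
   from the original one through the relation eta0^i = T^{ijk} theta^k ell^j:
     eta0^i - (W' theta'(eta))^i = T^{ijk} theta^k (ell^j - (W theta)^j)
   identically on jet space. *)
Definition admissible_coeff (R : realType) (J : Type) (q m m' K : nat)
  (ell : J -> 'I_q -> R) (theta : J -> 'I_m -> R)
  (eta0 : J -> 'I_q -> R) (eta : J -> 'I_K -> R)
  (theta' : ('I_K -> R) -> 'I_m' -> R)
  (T : 'I_q -> 'I_q -> 'I_m -> R) (W : 'M[R]_(q, m)) : Prop :=
  exists W' : 'M[R]_(q, m'), forall (z : J) (i : 'I_q),
    eta0 z i - \sum_(a < m') W' i a * theta' (eta z) a
    = \sum_(j < q) \sum_(k < m)
        T i j k * theta z k * (ell z j - \sum_(l < m) W j l * theta z l).

From HB Require Import structures.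
From mathcomp Require Import all_boot all_order all_algebra.
From mathcomp Require Import reals.
From mathcomp Require Import zify ring.
From Stdlib Require Import Classical.
Import Order.TTheory GRing.Theory Num.Theory.
Local Open Scope ring_scope.

(* Once the invariants eta0 are expanded as T theta ell, the terms in ell
   cancel and admissibility of W says that W' theta'(eta) = T theta (W theta)
   holds identically for some W'.  Both sides are linear, in W' and in W, so
   the admissible W are closed under linear combinations; in the finite
   dimensional space of q x m matrices such a set is a subspace.  The
   invariance of the eta's and the relation theta' = S theta are what make the
   reformulation meaningful, but the linearity argument does not use them. *)

Lemma ltn_dimv_addv_line {K : fieldType} {V : vectType K} {U : {vspace V}} {x : V} :
  x \notin U -> (\dim U < \dim (U + <[x]>))%N.
Proof.
by move=> xU; rewrite (ltn_leqif (dimv_leqif_sup (addvSl U _))) subv_add subvv -memvE.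
Qed.

Lemma vspace_of_linear_pred (K : fieldType) (V : vectType K) (P : V -> Prop) :
  P 0 -> (forall a x y, P x -> P y -> P (a *: x + y)) ->
  exists U : {vspace V}, forall x, x \in U <-> P x.
Proof.
move=> P0 PZD.
(* Enlarge a subspace contained in P by a line through any point of P it
   misses; the codimension drops each time, so this stops at P itself. *)
suff grow (U : {vspace V}) : (forall x, x \in U -> P x) ->
    exists U' : {vspace V}, forall x, x \in U' <-> P x.
  by apply: (grow 0%VS) => x; rewrite memv0 => /eqP ->.
have [k] := ubnP (\dim {:V} - \dim U); elim: k U => // k IHk U codimU PU.
have [[x [Px xU]] | noP] := classic (exists x, P x /\ x \notin U); last first.
  exists U => x; split; first exact: PU.
  by move=> Px; apply: NNPP => /negP xU; apply: noP; exists x.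
have ltUx := ltn_dimv_addv_line xU.
have leUx := dimvS (subvf (U + <[x]>)%VS).
apply: (IHk (U + <[x]>)%VS); first lia.
move=> _ /memv_addP[u uU [_ /vlineP[c ->] ->]].
by rewrite addrC; apply: PZD => //; apply: PU.
Qed.

Section AdmissibleCoefficients.

Variables (R : realType) (J : Type) (q m m' K : nat).
Variables (ell : J -> 'I_q -> R) (theta : J -> 'I_m -> R).
Variables (eta0 : J -> 'I_q -> R) (eta : J -> 'I_K -> R).
Variables (theta' : ('I_K -> R) -> 'I_m' -> R) (T : 'I_q -> 'I_q -> 'I_m -> R).

Definition invariant_rhs (W' : 'M[R]_(q, m')) z i :=
  \sum_(a < m') W' i a * theta' (eta z) a.

Definition transformed_rhs (W : 'M[R]_(q, m)) z i :=
  \sum_(j < q) \sum_(k < m) T i j k * theta z k * \sum_(l < m) W j l * theta z l.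

Lemma invariant_rhs0 z i : invariant_rhs 0 z i = 0.
Proof. by rewrite /invariant_rhs big1 // => a _; rewrite mxE mul0r. Qed.

Lemma transformed_rhs0 z i : transformed_rhs 0 z i = 0.
Proof.
rewrite /transformed_rhs big1 // => j _; rewrite big1 // => k _.
by rewrite big1 ?mulr0 // => l _; rewrite mxE mul0r.
Qed.

Lemma invariant_rhsZD c X Y z i :
  invariant_rhs (c *: X + Y) z i = c * invariant_rhs X z i + invariant_rhs Y z i.
Proof.
rewrite /invariant_rhs mulr_sumr -big_split; apply: eq_bigr => a _ /=.
by rewrite !mxE; ring.
Qed.

Lemma transformed_rhsZD c X Y z i :
  transformed_rhs (c *: X + Y) z i
  = c * transformed_rhs X z i + transformed_rhs Y z i.
Proof.
rewrite /transformed_rhs mulr_sumr -big_split; apply: eq_bigr => j _ /=.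
rewrite mulr_sumr -big_split; apply: eq_bigr => k _ /=.
rewrite !mulr_sumr -big_split; apply: eq_bigr => l _ /=.
by rewrite !mxE; ring.
Qed.

Hypothesis eta0E :
  forall z i, eta0 z i = \sum_(j < q) \sum_(k < m) T i j k * theta z k * ell z j.

Lemma admissible_coeffE W :
  admissible_coeff ell theta eta0 eta theta' T W
  <-> exists W', forall z i, invariant_rhs W' z i = transformed_rhs W z i.
Proof.
have splitE z i : \sum_(j < q) \sum_(k < m)
    T i j k * theta z k * (ell z j - \sum_(l < m) W j l * theta z l)
    = eta0 z i - transformed_rhs W z i.
  rewrite eta0E -sumrB; apply: eq_bigr => j _.
  by rewrite -sumrB; apply: eq_bigr => k _; rewrite mulrBr.
split=> -[W' HW']; exists W' => z i; last by rewrite splitE -HW'.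
by apply/oppr_inj/(addrI (eta0 z i)); rewrite -splitE; apply: HW'.
Qed.

Lemma admissible_coeff0 : admissible_coeff ell theta eta0 eta theta' T 0.
Proof.
by apply/admissible_coeffE; exists 0 => z i; rewrite invariant_rhs0 transformed_rhs0.
Qed.

Lemma admissible_coeffZD c X Y :
  admissible_coeff ell theta eta0 eta theta' T X ->
  admissible_coeff ell theta eta0 eta theta' T Y ->
  admissible_coeff ell theta eta0 eta theta' T (c *: X + Y).
Proof.
move=> /admissible_coeffE[X' HX] /admissible_coeffE[Y' HY].
apply/admissible_coeffE; exists (c *: X' + Y') => z i.
by rewrite invariant_rhsZD transformed_rhsZD HX HY.
Qed.

End AdmissibleCoefficients.

Theorem proposition4p4 (R : realType) (p q n m m' K : nat)
  (G : Type) (dom : G -> jet R p q n -> Prop)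
  (act : G -> jet R p q n -> jet R p q n)
  (ell : jet R p q n -> 'I_q -> R) (theta : jet R p q n -> 'I_m -> R)
  (eta0 : jet R p q n -> 'I_q -> R) (eta : jet R p q n -> 'I_K -> R)
  (theta' : ('I_K -> R) -> 'I_m' -> R)
  (T : 'I_q -> 'I_q -> 'I_m -> R) (S : 'I_m' -> 'I_m -> R) :
  (forall i, diff_invariant dom act (fun z => eta0 z i)) ->
  (forall a, diff_invariant dom act (fun z => eta z a)) ->
  (forall z i, eta0 z i = \sum_(j < q) \sum_(k < m) T i j k * theta z k * ell z j) ->
  (forall z a, theta' (eta z) a = \sum_(b < m) S a b * theta z b) ->
  exists U : {vspace 'M[R]_(q, m)},
    forall W : 'M[R]_(q, m),
      (W \in U) <-> admissible_coeff ell theta eta0 eta theta' T W.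
Proof.
move=> _ _ eta0E _.
apply: vspace_of_linear_pred; first exact: admissible_coeff0.
by move=> c X Y; apply: admissible_coeffZD.
Qed.
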